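(* There is a set $E\subset[0,1]$ with $\dim_H(E)=0$ such that for every irrational $x\in[0,1]\setminus E$ the sequence $(g_k(x))_{k\in\mathbb{N}}$ of $\bar O^1$-symbols of $x$ is unbounded.
   Context: Every irrational $x\in(0,1)$ has a unique representation ($\bar O^1$-expansion) $$x=\sum_{k=1}^\infty\frac{(-1)^{k-1}}{g_1(g_1+g_2)\cdots(g_1+g_2+\dots+g_k)},\qquad g_k=g_k(x)\in\mathbb{N}=\{1,2,3,\dots\}.$$ The numbers $g_k(x)$ are called the $\bar O^1$-symbols of $x$. $\dim_H$ denotes Hausdorff dimension. *)

From Stdlib Require Import Reals QArith.
From Coquelicot Require Import Coquelicot.
Open Scope R_scope.

(* d^s for d >= 0 and s > 0, with 0^s = 0 (Stdlib's Rpower 0 s is 1). *)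
Definition rpow0 (d s : R) : R := if Rle_dec d 0 then 0 else Rpower d s.

Definition delta_cover (delta : R) (E : R -> Prop)
    (U : nat -> R -> Prop) (d : nat -> R) : Prop :=
  (forall x, E x -> exists i, U i x) /\
  (forall i, 0 <= d i <= delta) /\
  (forall i x y, U i x -> U i y -> Rabs (x - y) <= d i).

Definition hausdorff_content (s delta : R) (E : R -> Prop) : Rbar :=
  Rbar_glb (fun v : Rbar => exists (U : nat -> R -> Prop) (d : nat -> R),
     delta_cover delta E U d /\
     v = Lim_seq (fun n => sum_n (fun i => rpow0 (d i) s) n)).

Definition hausdorff_measure (s : R) (E : R -> Prop) : Rbar :=
  Rbar_lub (fun v : Rbar => exists delta, 0 < delta /\ v = hausdorff_content s delta E).

Definition hausdorff_dim (E : R -> Prop) : Rbar :=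
  Rbar_glb (fun t : Rbar => exists s, 0 < s /\ t = Finite s /\
                                      hausdorff_measure s E = Finite 0).

Definition irrational (x : R) : Prop := ~ exists q : Q, x = Q2R q.

(* Symbols are indexed from 0: g 0 = g_1, g 1 = g_2, ...
   partial_g g j = g_1 + ... + g_{j+1}. *)
Definition partial_g (g : nat -> nat) (j : nat) : R :=
  sum_n (fun i => INR (g i)) j.

Fixpoint denom (g : nat -> nat) (k : nat) : R :=
  match k with
  | O => partial_g g 0
  | S k' => denom g k' * partial_g g (S k')
  end.

(* g is an O-bar^1 expansion of x: all g_k in N = {1,2,...} and
   x = sum_{k>=1} (-1)^(k-1) / (g_1 (g_1+g_2) ... (g_1+...+g_k)). *)
Definition O1_expansion (x : R) (g : nat -> nat) : Prop :=
  (forall k, (1 <= g k)%nat) /\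
  is_series (fun k => (-1) ^ k / denom g k) x.

(* Since g_1 + ... + g_k >= k, the k-th denominator is at least k!, so the first n symbols
   of x determine x up to 4/(n+1)!.  The points whose symbols are all at most b therefore
   lie in b^n intervals of length 4/(n+1)!, and b^n (4/(n+1)!)^s -> 0 for every s > 0.
   Taking n large enough for each bound b and adding up over b shows that the set of points
   with a bounded expansion has s-dimensional Hausdorff measure 0 for every s > 0. *)

From Stdlib Require Import Reals QArith Lia Lra Factorial IndefiniteDescription Classical_Prop.
From Coquelicot Require Import Coquelicot.
Open Scope R_scope.

Fixpoint psum (f : nat -> R) (n : nat) : R :=
  match n with O => 0 | S n => psum f n + f n end.

Lemma sum_n_psum f n : sum_n f n = psum f (S n).
Proof.
  induction n as [|n IH]; simpl.
  - rewrite sum_O. lra.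
  - rewrite sum_Sn, IH. simpl. unfold plus; simpl. lra.
Qed.

Lemma psum_ext f g n : (forall k, (k < n)%nat -> f k = g k) -> psum f n = psum g n.
Proof.
  induction n as [|n IH]; intros H; simpl; auto.
  rewrite IH, H; auto; intros; apply H; lia.
Qed.

Lemma psum_le f g n : (forall k, (k < n)%nat -> f k <= g k) -> psum f n <= psum g n.
Proof.
  induction n as [|n IH]; intros H; simpl; [lra|].
  assert (f n <= g n) by (apply H; lia).
  assert (psum f n <= psum g n) by (apply IH; intros; apply H; lia).
  lra.
Qed.

Lemma psum_ge0 f n : (forall k, 0 <= f k) -> 0 <= psum f n.
Proof. intros H; induction n as [|n IH]; simpl; [lra|]. specialize (H n); lra. Qed.

Lemma psum_le_mono f n n' : (forall k, 0 <= f k) -> (n <= n')%nat -> psum f n <= psum f n'.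
Proof. intros H Hle; induction Hle as [|m _ IH]; simpl; [lra|]. specialize (H m); lra. Qed.

Lemma psum_add f n m : psum f (n + m) = psum f n + psum (fun t => f (n + t)%nat) m.
Proof.
  induction m as [|m IH]; simpl.
  - rewrite Nat.add_0_r; lra.
  - rewrite Nat.add_succ_r; simpl; rewrite IH; lra.
Qed.

Lemma psum_abs f n : Rabs (psum f n) <= psum (fun k => Rabs (f k)) n.
Proof.
  induction n as [|n IH]; simpl.
  - rewrite Rabs_R0; lra.
  - eapply Rle_trans; [apply Rabs_triang|]. lra.
Qed.

Lemma psum_scal_r c f n : psum (fun k => f k * c) n = psum f n * c.
Proof. induction n as [|n IH]; simpl; [lra|]. rewrite IH; lra. Qed.

Lemma psum_const c n : psum (fun _ => c) n = INR n * c.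
Proof. induction n as [|n IH]; simpl psum; [simpl; ring|]. rewrite IH, S_INR; ring. Qed.

Lemma psum_geom_half_le n : psum (pow (/2)) n <= 2.
Proof.
  assert (H : psum (pow (/2)) n + 2 * (/2) ^ n = 2).
  { induction n as [|n IH]; simpl; lra. }
  pose proof (pow_lt (/2) n ltac:(lra)). lra.
Qed.

Definition O1_term (g : nat -> nat) (k : nat) : R := (-1) ^ k / denom g k.

Lemma fact_INR_pos n : 0 < INR (fact n).
Proof. apply lt_0_INR, lt_O_fact. Qed.

Section Symbols.

Variable g : nat -> nat.
Hypothesis g_ge1 : forall k, (1 <= g k)%nat.

Lemma partial_g_ge j : INR (S j) <= partial_g g j.
Proof.
  unfold partial_g; induction j as [|j IH].
  - rewrite sum_O. apply le_INR, g_ge1.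
  - rewrite sum_Sn, S_INR. change (plus ?a ?b) with (a + b).
    pose proof (le_INR _ _ (g_ge1 (S j))) as Hg. simpl in Hg. lra.
Qed.

Lemma denom_ge_fact k : INR (fact (S k)) <= denom g k.
Proof.
  induction k as [|k IH]; simpl denom.
  - pose proof (partial_g_ge 0). simpl in *. lra.
  - change (fact (S (S k))) with (S (S k) * fact (S k))%nat.
    rewrite mult_INR, Rmult_comm. pose proof (partial_g_ge (S k)).
    apply Rmult_le_compat; auto using pos_INR, Rlt_le, fact_INR_pos.
Qed.

Lemma denom_pos k : 0 < denom g k.
Proof. eapply Rlt_le_trans; [apply fact_INR_pos|apply denom_ge_fact]. Qed.

Lemma denom_add_ge n t : 2 ^ t * denom g n <= denom g (n + t).
Proof.
  induction t as [|t IH].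
  - rewrite Nat.add_0_r; simpl; lra.
  - rewrite Nat.add_succ_r; simpl denom.
    pose proof (partial_g_ge (S (n + t))) as Hp. rewrite !S_INR in Hp.
    pose proof (pos_INR (n + t)). pose proof (denom_pos (n + t)).
    simpl pow. rewrite Rmult_assoc.
    apply Rle_trans with (2 * denom g (n + t)); [lra|]. nra.
Qed.

Lemma O1_term_abs_le n t : Rabs (O1_term g (n + t)) <= (/2) ^ t / INR (fact (S n)).
Proof.
  unfold O1_term, Rdiv. rewrite Rabs_mult, pow_1_abs, Rmult_1_l.
  rewrite Rabs_inv, Rabs_pos_eq by apply Rlt_le, denom_pos.
  rewrite pow_inv, <- Rinv_mult.
  apply Rinv_le_contravar.
  - apply Rmult_lt_0_compat; [apply pow_lt; lra|apply fact_INR_pos].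
  - eapply Rle_trans; [|apply denom_add_ge].
    apply Rmult_le_compat_l; [apply pow_le; lra|apply denom_ge_fact].
Qed.

End Symbols.

Lemma O1_expansion_tail x g n :
  O1_expansion x g -> Rabs (x - psum (O1_term g) n) <= 2 / INR (fact (S n)).
Proof.
  intros [Hg Hx].
  set (S_n := psum (O1_term g) n).
  assert (Hlim : is_lim_seq (fun N => Rabs (sum_n (O1_term g) N - S_n)) (Rabs (x - S_n))).
  { apply (is_lim_seq_abs _ (Finite (x - S_n))).
    apply is_lim_seq_minus'; [exact Hx|apply is_lim_seq_const]. }
  assert (Hev : eventually (fun N => Rabs (sum_n (O1_term g) N - S_n) <= 2 / INR (fact (S n)))).
  { exists n. intros N HN.
    rewrite sum_n_psum. replace (S N) with (n + (S N - n))%nat by lia.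
    rewrite psum_add. unfold S_n. rewrite Rplus_minus_l.
    eapply Rle_trans; [apply psum_abs|].
    eapply Rle_trans; [apply psum_le; intros t _; apply (O1_term_abs_le g Hg)|].
    unfold Rdiv. rewrite psum_scal_r.
    apply Rmult_le_compat_r; [|exact (psum_geom_half_le _)].
    apply Rlt_le, Rinv_0_lt_compat, fact_INR_pos. }
  exact (is_lim_seq_le_loc _ _ _ _ Hev Hlim (is_lim_seq_const _)).
Qed.

(* The first [n] symbols, each in [1..b], read as the base-[b] digits [g k - 1]. *)
Fixpoint cylinder_code (b n : nat) (g : nat -> nat) : nat :=
  match n with
  | O => O
  | S n => (g O - 1) + b * cylinder_code b n (fun k => g (S k))
  end.

Lemma cylinder_code_lt b n g :
  (forall k, 1 <= g k <= b)%nat -> (cylinder_code b n g < b ^ n)%nat.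
Proof.
  revert g; induction n as [|n IH]; intros g Hg; simpl; [lia|].
  specialize (IH (fun k => g (S k)) (fun k => Hg (S k))). specialize (Hg O). nia.
Qed.

Lemma cylinder_code_inj b n g g' :
  (forall k, 1 <= g k <= b)%nat -> (forall k, 1 <= g' k <= b)%nat ->
  cylinder_code b n g = cylinder_code b n g' -> forall k, (k < n)%nat -> g k = g' k.
Proof.
  revert g g'; induction n as [|n IH]; intros g g' Hg Hg' Hc k Hk; [lia|]. simpl in Hc.
  pose proof (Hg O); pose proof (Hg' O).
  set (c := cylinder_code b n (fun k => g (S k))) in Hc.
  set (c' := cylinder_code b n (fun k => g' (S k))) in Hc.
  assert (Hcc : c = c' /\ g O = g' O).
  { destruct (Nat.lt_trichotomy c c') as [|[|]]; nia. }
  destruct k as [|k]; [tauto|].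
  apply (IH (fun k => g (S k)) (fun k => g' (S k))); auto; try tauto; lia.
Qed.

Lemma denom_ext g g' j : (forall k, (k <= j)%nat -> g k = g' k) -> denom g j = denom g' j.
Proof.
  assert (Hp : forall i, (forall k, (k <= i)%nat -> g k = g' k) -> partial_g g i = partial_g g' i).
  { intros i H. apply sum_n_ext_loc. intros k Hk. rewrite H; auto. }
  induction j as [|j IH]; intros H; simpl; [auto|].
  rewrite IH, Hp; auto.
Qed.

Lemma psum_O1_term_ext g g' n :
  (forall k, (k < n)%nat -> g k = g' k) -> psum (O1_term g) n = psum (O1_term g') n.
Proof.
  intros H. apply psum_ext. intros k Hk. unfold O1_term.
  rewrite (denom_ext g g'); auto. intros; apply H; lia.
Qed.

Lemma cylinder_diam b n x y g g' :
  (forall k, 1 <= g k <= b)%nat -> (forall k, 1 <= g' k <= b)%nat ->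
  O1_expansion x g -> O1_expansion y g' ->
  cylinder_code b n g = cylinder_code b n g' ->
  Rabs (x - y) <= 4 / INR (fact (S n)).
Proof.
  intros Hg Hg' Hx Hy Hc.
  pose proof (O1_expansion_tail x g n Hx) as Tx.
  pose proof (O1_expansion_tail y g' n Hy) as Ty.
  rewrite (psum_O1_term_ext g g' n) in Tx by (apply cylinder_code_inj with b; auto).
  replace (x - y) with ((x - psum (O1_term g') n) - (y - psum (O1_term g') n)) by ring.
  eapply Rle_trans; [apply Rabs_triang|]. rewrite Rabs_Ropp. lra.
Qed.

Lemma is_lim_seq_inv_fact : is_lim_seq (fun n => / INR (fact (S n))) 0.
Proof.
  replace (Finite 0) with (Rbar_inv p_infty) by reflexivity.
  apply is_lim_seq_inv; [|discriminate].
  apply is_lim_seq_le_p_loc with (u := fun n => INR (S n)).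
  - exists O; intros n _. apply le_INR.
    change (fact (S n)) with (S n * fact n)%nat. pose proof (lt_O_fact n). nia.
  - apply (is_lim_seq_incr_1 INR p_infty), is_lim_seq_INR.
Qed.

Lemma is_lim_seq_Rpower_INR s : 0 < s -> is_lim_seq (fun n => Rpower (INR n) s) p_infty.
Proof.
  intros Hs. unfold Rpower.
  apply (is_lim_comp_seq exp _ p_infty); [exact is_lim_exp_p|exists O; discriminate|].
  assert (Hmult : Rbar_mult s p_infty = p_infty).
  { apply is_Rbar_mult_unique, is_Rbar_mult_sym, is_Rbar_mult_p_infty_pos. exact Hs. }
  rewrite <- Hmult. apply is_lim_seq_scal_l.
  apply (is_lim_comp_seq ln _ p_infty); [exact is_lim_ln_p|exists O; discriminate|exact is_lim_seq_INR].
Qed.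

Lemma Rpower_inv t s : 0 < t -> Rpower (/ t) s = / Rpower t s.
Proof.
  intros Ht. unfold Rpower. rewrite ln_Rinv by exact Ht.
  rewrite <- exp_Ropp. f_equal. ring.
Qed.

(* The ratio of consecutive terms is r / (n+2)^s, so they are the terms of a convergent series. *)
Lemma is_lim_seq_cylinder_weight r s : 0 < r -> 0 < s ->
  is_lim_seq (fun n => r ^ n * Rpower (4 / INR (fact (S n))) s) 0.
Proof.
  intros Hr Hs. set (a := fun n => r ^ n * Rpower (4 / INR (fact (S n))) s).
  assert (Hpos : forall n, 0 < a n).
  { intro n. apply Rmult_lt_0_compat; [apply pow_lt; lra|apply exp_pos]. }
  assert (Hratio : forall n, Rabs (a (S n) / a n) = r * / Rpower (INR (S (S n))) s).
  { intro n. rewrite Rabs_pos_eq by (apply Rlt_le, Rdiv_lt_0_compat; auto).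
    set (q := 4 / INR (fact (S n))). set (t := INR (S (S n))).
    assert (Hq : 0 < q) by (apply Rdiv_lt_0_compat; [lra|apply fact_INR_pos]).
    assert (Ht : 0 < t) by (apply lt_0_INR; lia).
    assert (Hfact : 4 / INR (fact (S (S n))) = q * / t).
    { change (fact (S (S n))) with (S (S n) * fact (S n))%nat. rewrite mult_INR.
      unfold q, t. field. split; apply Rgt_not_eq; [exact Ht|apply fact_INR_pos]. }
    unfold a. rewrite Hfact, <- Rpower_mult_distr, Rpower_inv by (auto; apply Rinv_0_lt_compat; auto).
    fold q. pose proof (exp_pos (s * ln q)). pose proof (exp_pos (s * ln t)).
    unfold Rpower in *. simpl pow. field.
    repeat split; apply Rgt_not_eq; auto. apply pow_lt; lra. }
  assert (Hlim_ratio : is_lim_seq (fun n => Rabs (a (S n) / a n)) 0).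
  { apply (is_lim_seq_ext (fun n => r * / Rpower (INR (S (S n))) s)); [intro n; auto|].
    replace (Finite 0) with (Rbar_mult r (Rbar_inv p_infty)) by (simpl; f_equal; ring).
    apply is_lim_seq_scal_l, is_lim_seq_inv; [|discriminate].
    apply (is_lim_seq_incr_1 (fun n => Rpower (INR (S n)) s)).
    apply (is_lim_seq_incr_1 (fun n => Rpower (INR n) s)).
    exact (is_lim_seq_Rpower_INR s Hs). }
  assert (Hser := ex_series_DAlembert a 0 ltac:(lra) (fun n => Rgt_not_eq _ _ (Hpos n)) Hlim_ratio).
  apply (is_lim_seq_ext _ _ _ (fun n => Rabs_pos_eq _ (Rlt_le _ _ (Hpos n)))).
  exact (ex_series_lim_0 _ Hser).
Qed.

Lemma cylinder_scale_exists r s eta delta : 0 < r -> 0 < s -> 0 < eta -> 0 < delta ->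
  exists n, r ^ n * Rpower (4 / INR (fact (S n))) s <= eta /\ 4 / INR (fact (S n)) <= delta.
Proof.
  intros Hr Hs Heta Hdelta.
  assert (Hdiam : is_lim_seq (fun n => 4 * / INR (fact (S n))) 0).
  { replace (Finite 0) with (Rbar_mult 4 0) by (simpl; f_equal; ring).
    apply is_lim_seq_scal_l, is_lim_seq_inv_fact. }
  apply is_lim_seq_spec in Hdiam.
  pose proof (proj2 (is_lim_seq_spec _ _) (is_lim_seq_cylinder_weight r s Hr Hs)) as Hweight.
  destruct (filter_and _ _ (Hweight (mkposreal eta Heta)) (Hdiam (mkposreal delta Hdelta)))
    as [N HN].
  exists N. destruct (HN N (le_n N)) as [H1 H2]. cbn [pos] in H1, H2.
  rewrite Rminus_0_r in H1, H2. apply Rabs_lt_between in H1, H2. unfold Rdiv in *. lra.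
Qed.

Lemma Rbar_le_0_of_le_pos (b : Rbar) : (forall eps, 0 < eps -> Rbar_le b eps) -> Rbar_le b 0.
Proof.
  intros Hb. destruct b as [r| |]; simpl; auto.
  - apply Rnot_lt_le. intros Hr. specialize (Hb (r / 2) ltac:(lra)). simpl in Hb. lra.
  - exact (Hb 1 Rlt_0_1).
Qed.

Lemma rpow0_ge0 d s : 0 <= rpow0 d s.
Proof. unfold rpow0. destruct (Rle_dec d 0); [lra|]. apply Rlt_le, exp_pos. Qed.

Lemma hausdorff_content_eq0 s delta E :
  (forall eps, 0 < eps -> exists U d, delta_cover delta E U d /\
     Rbar_le (Lim_seq (fun n => sum_n (fun i => rpow0 (d i) s) n)) eps) ->
  hausdorff_content s delta E = Finite 0.
Proof.
  intros Hcov. apply Rbar_is_glb_unique. split.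
  - intros v [U [d [_ ->]]].
    replace (Finite 0) with (Lim_seq (fun _ => 0)) by apply Lim_seq_const.
    apply Lim_seq_le_loc. exists O. intros N _.
    rewrite sum_n_psum. apply psum_ge0. intro; apply rpow0_ge0.
  - intros b Hb. apply Rbar_le_0_of_le_pos. intros eps Heps.
    destruct (Hcov eps Heps) as [U [d [HU Hsum]]].
    exact (Rbar_le_trans _ _ _ (Hb _ (ex_intro _ U (ex_intro _ d (conj HU eq_refl)))) Hsum).
Qed.

Lemma hausdorff_measure_eq0 s E :
  (forall delta, 0 < delta -> hausdorff_content s delta E = Finite 0) ->
  hausdorff_measure s E = Finite 0.
Proof.
  intros Hcont. apply Rbar_is_lub_unique. split.
  - intros v [delta [Hdelta ->]]. rewrite Hcont by exact Hdelta. apply Rbar_le_refl.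
  - intros b Hb. apply Hb. exists 1. split; [lra|]. symmetry; apply Hcont; lra.
Qed.

Lemma hausdorff_dim_eq0 E :
  (forall s, 0 < s -> hausdorff_measure s E = Finite 0) -> hausdorff_dim E = Finite 0.
Proof.
  intros Hnull. apply Rbar_is_glb_unique. split.
  - intros t [s [Hs [-> _]]]. simpl; lra.
  - intros b Hb. apply Rbar_le_0_of_le_pos. intros s Hs.
    apply Hb. exists s. auto.
Qed.

Section BlockCover.

Variable L : nat -> nat.

Fixpoint block_start (m : nat) : nat :=
  match m with O => O | S m => (block_start m + L m)%nat end.

Lemma block_start_le_lt m m' : (m < m')%nat -> (block_start (S m) <= block_start m')%nat.
Proof. intros H; induction H as [|m' _ IH]; simpl in *; lia. Qed.

Lemma block_index_unique m j m' j' : (j < L m)%nat -> (j' < L m')%nat ->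
  (block_start m + j = block_start m' + j')%nat -> m = m' /\ j = j'.
Proof.
  intros Hj Hj' Heq. destruct (Nat.lt_trichotomy m m') as [Hlt|[->|Hlt]].
  - pose proof (block_start_le_lt _ _ Hlt). simpl in *. lia.
  - lia.
  - pose proof (block_start_le_lt _ _ Hlt). simpl in *. lia.
Qed.

Hypothesis L_ge1 : forall m, (1 <= L m)%nat.

Lemma block_start_ge m : (m <= block_start m)%nat.
Proof. induction m as [|m IH]; simpl; [lia|]. specialize (L_ge1 m); lia. Qed.

Lemma block_index_exists i :
  exists p : nat * nat, i = (block_start (fst p) + snd p)%nat /\ (snd p < L (fst p))%nat.
Proof.
  induction i as [|i [[m j] [Hi Hj]]]; simpl in *.
  - exists (O, O). specialize (L_ge1 O). simpl; lia.
  - destruct (Nat.lt_ge_cases (S j) (L m)).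
    + exists (m, S j); simpl; lia.
    + exists (S m, O); simpl. specialize (L_ge1 (S m)). lia.
Qed.

(* Enumerating the blocks one after the other turns the [L m] pieces of size [d m]
   into a single countable cover. *)
Lemma block_cover_exists s delta (E : R -> Prop) (C : nat -> nat -> R -> Prop)
    (d : nat -> R) eps :
  (forall x, E x -> exists m j, (j < L m)%nat /\ C m j x) ->
  (forall m, 0 <= d m <= delta) ->
  (forall m j x y, C m j x -> C m j y -> Rabs (x - y) <= d m) ->
  (forall M, psum (fun m => INR (L m) * rpow0 (d m) s) M <= eps) ->
  exists U d', delta_cover delta E U d' /\
    Rbar_le (Lim_seq (fun n => sum_n (fun i => rpow0 (d' i) s) n)) eps.
Proof.
  intros Hcov Hd Hdiam Hsum.
  destruct (functional_choice _ block_index_exists) as [index Hindex].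
  assert (Hindex_eq : forall m j, (j < L m)%nat -> index (block_start m + j)%nat = (m, j)).
  { intros m j Hj. destruct (Hindex (block_start m + j)%nat) as [Heq Hlt].
    destruct (index (block_start m + j)%nat) as [m' j']; simpl in *.
    destruct (block_index_unique _ _ _ _ Hlt Hj (eq_sym Heq)) as [-> ->]. reflexivity. }
  exists (fun i => C (fst (index i)) (snd (index i))), (fun i => d (fst (index i))).
  split; [split; [|split]|].
  - intros x Hx. destruct (Hcov x Hx) as [m [j [Hj HC]]].
    exists (block_start m + j)%nat. rewrite Hindex_eq by exact Hj. exact HC.
  - intro i. apply Hd.
  - intros i x y. apply Hdiam.
  - assert (Hblocks : forall M, psum (fun i => rpow0 (d (fst (index i))) s) (block_start M)
                                = psum (fun m => INR (L m) * rpow0 (d m) s) M).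
    { induction M as [|M IH]; simpl; auto.
      rewrite psum_add, IH, <- psum_const. f_equal.
      apply psum_ext. intros j Hj. rewrite Hindex_eq by exact Hj. reflexivity. }
    replace (Finite eps) with (Lim_seq (fun _ => eps)) by apply Lim_seq_const.
    apply Lim_seq_le_loc. exists O. intros N _. rewrite sum_n_psum.
    eapply Rle_trans; [apply psum_le_mono with (n' := block_start (S N))|].
    + intro; apply rpow0_ge0.
    + apply block_start_ge.
    + rewrite Hblocks. apply Hsum.
Qed.

End BlockCover.

Definition bounded_O1_points (x : R) : Prop :=
  0 <= x <= 1 /\ exists (M : nat) (g : nat -> nat), O1_expansion x g /\ forall k, (g k <= M)%nat.

Lemma rpow0_pos d s : 0 < d -> rpow0 d s = Rpower d s.
Proof. intros Hd. unfold rpow0. destruct (Rle_dec d 0); [lra|reflexivity]. Qed.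

(* Points whose symbols are at most [m+1] lie in [(m+1)^n] cylinders of diameter [4/(n+1)!];
   [n] is chosen for each [m] so that these cylinders carry weight at most [eps/2^(m+1)]. *)
Lemma hausdorff_content_bounded_O1_points s delta : 0 < s -> 0 < delta ->
  hausdorff_content s delta bounded_O1_points = Finite 0.
Proof.
  intros Hs Hdelta. apply hausdorff_content_eq0. intros eps Heps.
  assert (Hscale : forall m : nat, exists n : nat,
    INR (S m) ^ n * Rpower (4 / INR (fact (S n))) s <= eps / 2 * (/2) ^ m /\
    4 / INR (fact (S n)) <= delta).
  { intro m. apply cylinder_scale_exists; auto.
    - apply lt_0_INR; lia.
    - apply Rmult_lt_0_compat; [lra|apply pow_lt; lra]. }
  destruct (functional_choice _ Hscale) as [n Hn].
  set (d := fun m => 4 / INR (fact (S (n m)))).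
  assert (Hd : forall m, 0 < d m) by (intro m; apply Rdiv_lt_0_compat; [lra|apply fact_INR_pos]).
  assert (HL : forall m, (1 <= S m ^ n m)%nat).
  { intro m. pose proof (Nat.pow_nonzero (S m) (n m)). lia. }
  apply (block_cover_exists _ HL) with (d := d)
    (C := fun m j x => exists g, O1_expansion x g /\ (forall k, g k <= S m)%nat /\
                                cylinder_code (S m) (n m) g = j).
  - intros x [_ [M [g [Hg HM]]]]. exists M, (cylinder_code (S M) (n M) g). split.
    + apply cylinder_code_lt. intro k. destruct Hg as [Hg _]. specialize (Hg k); specialize (HM k); lia.
    + exists g. split; [exact Hg|split; [|reflexivity]]. intro k; specialize (HM k); lia.
  - intro m. split; [apply Rlt_le, Hd|apply Hn].
  - intros m j x y [g [Hg [Hgb Hgc]]] [g' [Hg' [Hgb' Hgc']]].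
    apply (cylinder_diam (S m) _ x y g g'); auto; try congruence.
    + intro k. destruct Hg as [H _]. specialize (H k); specialize (Hgb k); lia.
    + intro k. destruct Hg' as [H _]. specialize (H k); specialize (Hgb' k); lia.
  - intro M. apply Rle_trans with (psum (fun m => eps / 2 * (/2) ^ m) M).
    + apply psum_le. intros m _. rewrite pow_INR, rpow0_pos by apply Hd. apply Hn.
    + rewrite psum_ext with (g := fun m => (/2) ^ m * (eps / 2)) by (intros; ring).
      rewrite psum_scal_r. pose proof (psum_geom_half_le M). nra.
Qed.

Theorem corollary2 :
  exists E : R -> Prop,
    (forall x, E x -> 0 <= x <= 1) /\
    hausdorff_dim E = Finite 0 /\
    forall x : R, 0 <= x <= 1 -> irrational x -> ~ E x ->
      forall g : nat -> nat, O1_expansion x g ->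
        forall M : nat, exists k : nat, (M < g k)%nat.
Proof.
  exists bounded_O1_points. split; [|split].
  - intros x [Hx _]. exact Hx.
  - apply hausdorff_dim_eq0. intros s Hs.
    apply hausdorff_measure_eq0. intros delta Hdelta.
    exact (hausdorff_content_bounded_O1_points s delta Hs Hdelta).
  - intros x Hx _ Hunbounded g Hg M. apply NNPP. intros Hbounded.
    apply Hunbounded. split; [exact Hx|]. exists M, g. split; [exact Hg|].
    intro k. apply Nat.nlt_ge. intros Hk. apply Hbounded. exists k. exact Hk.
Qed.
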